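(* Let $E$ be a finite set. The U-matroid rank functions on $E$ are precisely the restrictions $\rho|_\mathcal{D}$ of matroid rank functions $\rho:2^E\to\mathbb{N}$ to accessible distributive sublattices $\mathcal{D}\subseteq 2^E$.
   Context: An accessible distributive lattice on a finite set $E$ is a family $\mathcal{D}\subseteq 2^E$ containing $\emptyset$ and $E$, closed under union and intersection, such that every nonempty $A\in\mathcal{D}$ contains some $x$ with $A\setminus\{x\}\in\mathcal{D}$. A U-matroid rank function on $E$ is a function $\rho:\mathcal{D}\to\mathbb{N}$ on an accessible distributive lattice $\mathcal{D}\subseteq2^E$ satisfying $\rho(\emptyset)=0$; $\rho(A)\le\rho(B)$ whenever $A\subseteq B$; $\rho(A)+\rho(B)\ge\rho(A\cup B)+\rho(A\cap B)$; and $\rho(A\cup\{e\})-\rho(A)\le1$ whenever $A,A\cup\{e\}\in\mathcal{D}$. A matroid rank function is such a function with $\mathcal{D}=2^E$. *)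

(* E is modelled by a finite type T; 2^E is {set T}. *)
From mathcomp Require Import all_boot.
Set Implicit Arguments. Unset Strict Implicit. Unset Printing Implicit Defensive.

Definition accessible_distr_lattice (T : finType) (D : {set {set T}}) : Prop :=
  [/\ set0 \in D, [set: T] \in D,
      (forall A B, A \in D -> B \in D -> A :|: B \in D),
      (forall A B, A \in D -> B \in D -> A :&: B \in D)
    & (forall A, A \in D -> A != set0 -> exists2 x, x \in A & A :\ x \in D)].

(* rho : D -> N is represented by a total function {set T} -> nat of which
   only the values on D matter. *)
Definition U_matroid_rank (T : finType) (D : {set {set T}}) (rho : {set T} -> nat) : Prop :=
  accessible_distr_lattice D /\
  [/\ rho set0 = 0,
      (forall A B, A \in D -> B \in D -> A \subset B -> rho A <= rho B),
      (forall A B, A \in D -> B \in D ->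
          rho (A :|: B) + rho (A :&: B) <= rho A + rho B)
    & (forall A e, A \in D -> e |: A \in D -> rho (e |: A) - rho A <= 1)].

Definition matroid_rank (T : finType) (r : {set T} -> nat) : Prop :=
  U_matroid_rank [set: {set T}] r.

From mathcomp Require Import all_boot.

Set Implicit Arguments.
Unset Strict Implicit.
Unset Printing Implicit Defensive.

(** A U-matroid rank function [rho] on [D] extends to the matroid rank
    function [r X = min_{A in D} (rho A + |X \ A|)].  Monotonicity and the unit
    increase property are immediate, submodularity of [r] follows from that of
    [rho] since [D] is closed under union and intersection, and [r] agrees with
    [rho] on [D] because [rho (A :|: B) <= rho A + |B \ A|] for [A, B] in [D]:
    grow [A] to [A :|: B] by adding the elements of [B] one at a time along an
    accessible chain of [B], each step raising [rho] by at most one and only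
    when the new element lies outside [A]. *)

Lemma leq_cardsD_UI (T : finType) (X Z A B : {set T}) :
  #|(X :|: Z) :\: (A :|: B)| + #|(X :&: Z) :\: (A :&: B)|
    <= #|X :\: A| + #|Z :\: B|.
Proof.
rewrite -!sum1_card !(big_mkcond (fun i => i \in _)) -!big_split /=.
apply: leq_sum => x _.
by rewrite !inE; case: (x \in X); case: (x \in Z); case: (x \in A); case: (x \in B).
Qed.

Lemma leq_cardsD_setU1 (T : finType) (e : T) (X A : {set T}) :
  #|(e |: X) :\: A| <= #|X :\: A| + 1.
Proof.
rewrite addn1; apply: leq_trans (_ : #|e |: (X :\: A)| <= _).
  by apply: subset_leq_card; rewrite setDUl setSU ?subsetDl.
by rewrite cardsU1 -add1n leq_add2r leq_b1.
Qed.

Section UnionBound.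

Variables (T : finType) (D : {set {set T}}) (rho : {set T} -> nat).
Hypothesis DU : forall A B, A \in D -> B \in D -> A :|: B \in D.
Hypothesis D_accessible :
  forall A, A \in D -> A != set0 -> exists2 x, x \in A & A :\ x \in D.
Hypothesis rho_setU1 :
  forall A e, A \in D -> e |: A \in D -> rho (e |: A) - rho A <= 1.

Lemma rank_setU_le (A B : {set T}) :
  A \in D -> B \in D -> rho (A :|: B) <= rho A + #|B :\: A|.
Proof.
move=> AD; have [n] := ubnP #|B|; elim: n B => // n IH B ltBn BD.
have [-> | B_neq0] := eqVneq B set0; first by rewrite setU0 leq_addr.
have [x xB BxD] := D_accessible BD B_neq0.
have IHx : rho (A :|: B :\ x) <= rho A + #|B :\ x :\: A|.
  by apply: IH BxD; rewrite -ltnS (leq_trans _ ltBn) // (cardsD1 x B) xB.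
have defAB : A :|: B = x |: (A :|: B :\ x) by rewrite setUCA setD1K.
have defBA : B :\ x :\: A = B :\: (x |: A) by rewrite setDDl.
case: (boolP (x \in A)) => [xA | xNA].
  have xAA : x |: A = A by apply/setUidPr; rewrite sub1set.
  have -> : B :\: A = B :\ x :\: A by rewrite defBA xAA.
  by rewrite defAB setUA xAA.
have step : rho (A :|: B) <= rho (A :|: B :\ x) + 1.
  by rewrite -leq_subLR defAB rho_setU1 // -?defAB DU.
have cardBA : #|B :\: A| = #|B :\ x :\: A| + 1.
  by rewrite (cardsD1 x (B :\: A)) !inE xB xNA addnC !setDDl [A :|: _]setUC.
by rewrite cardBA addnA (leq_trans step) ?leq_add2r.
Qed.

End UnionBound.

(* Meaningful only when [set0 \in D], which seeds the [arg min]. *)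
Definition rank_ext (T : finType) (D : {set {set T}}) (rho : {set T} -> nat)
    (X : {set T}) : nat :=
  let cost A := rho A + #|X :\: A| in cost [arg min_(A < set0 in D) cost A].

Lemma accessible_distr_lattice_setT (T : finType) :
  accessible_distr_lattice [set: {set T}].
Proof.
split=> [||A B _ _|A B _ _|A _ /set0Pn[x xA]]; rewrite ?inE //.
by exists x; rewrite ?inE.
Qed.

Section RankExtension.

Variables (T : finType) (D : {set {set T}}) (rho : {set T} -> nat).
Hypothesis D0 : set0 \in D.
Hypothesis DU : forall A B, A \in D -> B \in D -> A :|: B \in D.
Hypothesis DI : forall A B, A \in D -> B \in D -> A :&: B \in D.
Hypothesis D_accessible :
  forall A, A \in D -> A != set0 -> exists2 x, x \in A & A :\ x \in D.
Hypothesis rho0 : rho set0 = 0.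
Hypothesis rho_mono :
  forall A B, A \in D -> B \in D -> A \subset B -> rho A <= rho B.
Hypothesis rho_submod : forall A B, A \in D -> B \in D ->
  rho (A :|: B) + rho (A :&: B) <= rho A + rho B.
Hypothesis rho_setU1 :
  forall A e, A \in D -> e |: A \in D -> rho (e |: A) - rho A <= 1.

Local Notation r := (rank_ext D rho).

Lemma rank_ext_le (X B : {set T}) : B \in D -> r X <= rho B + #|X :\: B|.
Proof. by move=> BD; rewrite /rank_ext; case: arg_minnP => // A _; apply. Qed.

Lemma rank_extP (X : {set T}) : exists2 A, A \in D & r X = rho A + #|X :\: A|.
Proof. by rewrite /rank_ext; case: arg_minnP => // A AD _; exists A. Qed.

Lemma rank_ext0 : r set0 = 0.
Proof.
by apply/eqP; rewrite -leqn0 (leq_trans (rank_ext_le _ D0)) // rho0 set0D cards0.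
Qed.

Lemma rank_ext_mono (X Y : {set T}) : X \subset Y -> r X <= r Y.
Proof.
move=> XY; have [A AD ->] := rank_extP Y.
by rewrite (leq_trans (rank_ext_le _ AD)) // leq_add2l subset_leq_card ?setSD.
Qed.

Lemma rank_ext_setU1 (X : {set T}) (e : T) : r (e |: X) <= r X + 1.
Proof.
have [A AD ->] := rank_extP X.
by rewrite (leq_trans (rank_ext_le _ AD)) // -addnA leq_add2l leq_cardsD_setU1.
Qed.

Lemma rank_ext_submod (X Z : {set T}) : r (X :|: Z) + r (X :&: Z) <= r X + r Z.
Proof.
have [A AD ->] := rank_extP X; have [B BD ->] := rank_extP Z.
apply: leq_trans (leq_add (rank_ext_le _ (DU AD BD)) (rank_ext_le _ (DI AD BD))) _.
by rewrite addnACA [rho A + _ + _]addnACA leq_add ?rho_submod ?leq_cardsD_UI.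
Qed.

Lemma rank_ext_eq_in : {in D, r =1 rho}.
Proof.
move=> B BD; apply/eqP; rewrite eqn_leq (leq_trans (rank_ext_le _ BD)); last first.
  by rewrite setDv cards0 addn0.
have [A AD ->] := rank_extP B.
rewrite (leq_trans _ (rank_setU_le DU D_accessible rho_setU1 AD BD)) //.
by rewrite rho_mono ?DU ?subsetUr.
Qed.

Lemma matroid_rank_ext : matroid_rank r.
Proof.
split; first exact: accessible_distr_lattice_setT.
split=> [|X Y _ _|X Z _ _|X e _ _]; first exact: rank_ext0.
- exact: rank_ext_mono.
- exact: rank_ext_submod.
- by rewrite leq_subLR rank_ext_setU1.
Qed.

End RankExtension.

Lemma U_matroid_rank_restrict (T : finType) (D : {set {set T}}) (r : {set T} -> nat) :
  accessible_distr_lattice D -> matroid_rank r -> U_matroid_rank D r.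
Proof.
move=> Dacc [_ [r0 r_mono r_submod r_setU1]]; split=> //.
by split=> // [A B _ _ AB|A B _ _|A e _ _];
  [apply: r_mono | apply: r_submod | apply: r_setU1]; rewrite ?inE.
Qed.

Lemma U_matroid_rank_eq_in (T : finType) (D : {set {set T}}) (r rho : {set T} -> nat) :
  U_matroid_rank D r -> {in D, r =1 rho} -> U_matroid_rank D rho.
Proof.
move=> [Dacc [r0 r_mono r_submod r_setU1]] r_rho; have [D0 _ DU DI _] := Dacc.
split=> //; split=> [|A B AD BD|A B AD BD|A e AD eAD].
- by rewrite -r_rho.
- by rewrite -!r_rho //; apply: r_mono.
- by rewrite -!r_rho ?DU ?DI //; apply: r_submod.
- by rewrite -!r_rho //; apply: r_setU1.
Qed.

Theorem corollary4p13 (T : finType) (D : {set {set T}}) (rho : {set T} -> nat) :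
  U_matroid_rank D rho <->
  accessible_distr_lattice D /\
  exists r : {set T} -> nat, matroid_rank r /\ {in D, forall A, r A = rho A}.
Proof.
split=> [rhoU | [Dacc [r [r_matroid r_rho]]]].
  have [Dacc [rho0 rho_mono rho_submod rho_setU1]] := rhoU.
  have [D0 _ DU DI D_accessible] := Dacc.
  split=> //; exists (rank_ext D rho); split.
  - exact: matroid_rank_ext.
  - exact: rank_ext_eq_in.
exact: U_matroid_rank_eq_in (U_matroid_rank_restrict Dacc r_matroid) r_rho.
Qed.
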